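(* Let $p$ be an odd prime, and let $k,m$ be positive integers with $km=p-1$. Let $G$ be the multiplicative group $\{r+p\mathbb{Z}: r=1,\ldots,p-1\}$ and $H$ its subgroup $\{x^m+p\mathbb{Z}: x=1,\ldots,p-1\}$ of order $k$. Suppose that the $m$ distinct cosets of $H$ in $G$ are $$\{a_{1j}+p\mathbb{Z}: j=1,\ldots,k\},\ \ldots,\ \{a_{mj}+p\mathbb{Z}: j=1,\ldots,k\}$$ with $1\le a_{i1}<\cdots<a_{ik}\le p-1$ for all $i=1,\ldots,m$. Then $$\prod_{i=1}^m\prod_{1\le s<t\le k}(a_{it}-a_{is})\equiv\begin{cases}(-1)^{\frac{p+1}2\cdot\frac{p-1}{2m}+\lfloor\frac{p-3}4\rfloor}\left(\frac{p-1}2\right)!\pmod p&\text{if } p\equiv1\pmod{2m},\\(-1)^{\frac{p+1}2\cdot\frac{p-1-m}{2m}}\pmod p&\text{if } p\equiv1+m\pmod{2m}.\end{cases}$$ *)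

From mathcomp Require Import all_boot all_order all_algebra.
Set Implicit Arguments. Unset Strict Implicit. Unset Printing Implicit Defensive.

(* Elements of G = (Z/pZ)^* are represented by their least positive
   residues r with 1 <= r <= p-1. *)

Definition inH (p m r : nat) : bool :=
  [exists x : 'I_p, (0 < x) && (r == (x ^ m) %% p)].

Definition in_coset (p m g r : nat) : bool :=
  (0 < r < p) && [exists h : 'I_p, inH p m h && (r == (g * h) %% p)].

Definition is_coset_of_H (p m : nat) (S : nat -> Prop) : Prop :=
  exists g : nat, 0 < g < p /\ forall r, S r <-> in_coset p m g r.

From mathcomp Require Import all_boot all_order all_algebra all_field.
From mathcomp Require Import zify ring.
Set Implicit Arguments. Unset Strict Implicit. Unset Printing Implicit Defensive.
Import GRing.Theory Num.Theory.
Local Open Scope ring_scope.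

(* Work in F_p, let res x be the least nonnegative residue of x, and call a
   nonzero x an ascent of h when res x < res (x h).  Writing a_t - a_s as
   x (h - 1) with x = a_s and h = a_t / a_s in H turns the product into
   \prod_(h in H) g h, where g h is the product of the x (h - 1) over the
   ascents x of h.  For h <> 0, 1, x is an ascent of h iff -x is not, so h has
   (p - 1)/2 ascents, and x |-> x h maps the non-ascents of h onto the ascents
   of h^-1; Wilson and Fermat then give g h * g h^-1 = (-1)^((p + 1)/2).
   Moreover g 1 = 1 and, by Gauss's lemma for the half system
   {1, ..., (p - 1)/2}, g (-1) = (-1)^[(p - 1)/4] ((p - 1)/2)!.  Pairing h with
   h^-1 in H \ {1, -1} gives the result; -1 lies in H exactly when k is even,
   that is, when p = 1 mod 2m. *)

Lemma prod_fixpointfree_involution (T : finType) (R : comPzSemiRingType)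
    (A : {set T}) (s : T -> T) (f : T -> R) (c : R) :
  {in A, forall x, [/\ s x \in A, s x != x, s (s x) = x & f x * f (s x) = c]} ->
  ~~ odd #|A| /\ \prod_(x in A) f x = c ^+ (#|A| %/ 2).
Proof.
elim: {A}_.+1 {-2}A (ltnSn #|A|) => // N IH A ltAN Hs.
have [-> | [x xA]] := set_0Vmem A; first by rewrite cards0 big_set0.
have [sxA sxx ssx fxc] := Hs x xA.
set B := A :\ x :\ s x.
have sxAx : s x \in A :\ x by rewrite !inE sxx.
have cardA : #|A| = #|B|.+2.
  by rewrite (cardsD1 x A) xA (cardsD1 (s x) (A :\ x)) sxAx.
have [oddB prodB] : ~~ odd #|B| /\ \prod_(y in B) f y = c ^+ (#|B| %/ 2).
  apply: IH => [|y]; first by move: ltAN; rewrite cardA; lia.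
  rewrite !inE => /and3P [ysx yx yA]; have [syA sy ssy fy] := Hs y yA.
  split => //; rewrite syA andbT; apply/andP; split.
  - by apply: contra yx => /eqP e; rewrite -ssy e ssx.
  - by apply: contra ysx => /eqP e; rewrite -ssy e.
rewrite cardA /= oddB; split => //.
rewrite (big_setD1 x) // (big_setD1 (s x)) //= prodB mulrA fxc -exprS.
by congr (_ ^+ _); lia.
Qed.

Lemma prod_scale_half_system (F : finFieldType) (L : {set F}) (c : F) :
  c != 0 -> 0 \notin L -> (forall z, z != 0 -> (- z \in L) = (z \notin L)) ->
  \prod_(x in L) (c * x) =
    (-1) ^+ #|[set x in L | c * x \notin L]| * \prod_(x in L) x.
Proof.
move=> c0 L0 Lopp.
have L_neq0 x : x \in L -> x != 0 by move=> xL; apply: contraNneq L0 => <-.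
pose rep x := if c * x \in L then c * x else - (c * x).
have repL : {in L, forall x, rep x \in L}.
  move=> x xL; rewrite /rep; case: ifP => // /negbT cxL.
  by rewrite Lopp // mulf_neq0 // L_neq0.
have repI : {in L &, injective rep}.
  have mixed u w : u \in L -> w \in L -> c * u = - (c * w) -> False.
    move=> uL wL; rewrite -mulrN => /(mulfI c0) eu.
    by move: uL; rewrite eu Lopp ?L_neq0 // wL.
  move=> x y xL yL; rewrite /rep.
  case: ifP => _; case: ifP => _.
  - exact: mulfI.
  - by move/(mixed _ _ xL yL).
  - by move/esym/(mixed _ _ yL xL).
  - by move/oppr_inj/(mulfI c0).
have rep_onto : [set rep x | x in L] = L.
  apply/eqP; rewrite eqEcard card_in_imset // leqnn andbT.
  by apply/subsetP => _ /imsetP [x xL ->]; exact: repL.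
have signs : \prod_(x in L) (if c * x \in L then 1 else -1) =
             (-1) ^+ #|[set x in L | c * x \notin L]| :> F.
  rewrite -prodr_const (bigID (fun x => c * x \in L)) /= big1 ?mul1r.
    by apply: eq_big => [x | x /andP [_ /negbTE ->]]; rewrite ?inE.
  by move=> x /andP [_ ->].
have scale_rep x : c * x = (if c * x \in L then 1 else -1) * rep x.
  by rewrite /rep; case: ifP; rewrite ?mul1r ?mulN1r ?opprK.
rewrite (eq_bigr _ (fun x _ => scale_rep x)) big_split /= signs.
by congr (_ * _); rewrite -{2}rep_onto big_imset.
Qed.

Section PrimeField.
Variable p : nat.
Hypothesis p_pr : prime p.
Local Notation F := 'F_p.

Definition res (x : F) : nat := nat_of_ord x.

Lemma res_nat l : res (l%:R : F) = (l %% p)%N.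
Proof. exact: val_Fp_nat. Qed.

Lemma res_lt x : (res x < p)%N.
Proof. by case: x => /= i; rewrite (Fp_cast p_pr). Qed.

Lemma resK x : (res x)%:R = x.
Proof. by apply: val_inj; rewrite /= -/(res _) res_nat modn_small ?res_lt. Qed.

Lemma natF_inj l l' : (l < p)%N -> (l' < p)%N -> (l%:R : F) = l'%:R -> l = l'.
Proof. by move=> lp l'p /(congr1 res); rewrite !res_nat !modn_small. Qed.

Lemma natF_eq0 l : (l < p)%N -> ((l%:R : F) == 0) = (l == 0)%N.
Proof.
move=> lp; apply/eqP/eqP => [e|-> //].
by apply: (@natF_inj l 0) => //; exact: prime_gt0.
Qed.

Lemma res_eq0 x : (res x == 0)%N = (x == 0).
Proof. by rewrite -(natF_eq0 (res_lt x)) resK. Qed.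

Lemma res0 : res 0 = 0%N.
Proof. by apply/eqP; rewrite res_eq0. Qed.

Lemma resN x : x != 0 -> res (- x) = (p - res x)%N.
Proof.
move=> x0; have x_lt := res_lt x; have x_gt0 : (0 < res x)%N by rewrite lt0n res_eq0.
have -> : - x = (p - res x)%:R by rewrite natrB ?(ltnW x_lt) // pchar_Fp_0 // resK sub0r.
by rewrite res_nat modn_small //; lia.
Qed.

Lemma fermat (x : F) : x != 0 -> x ^+ p.-1 = 1.
Proof.
move=> x0; apply: (mulfI x0); rewrite -exprS prednK ?prime_gt0 // mulr1.
by have := expf_card x; rewrite card_Fp.
Qed.

Definition segment l : {set F} := [set x | (0 < res x <= l)%N].

Lemma segment_image l : (l < p)%N -> segment l = [set (i.+1)%:R | i : 'I_l].
Proof.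
move=> lp; apply/setP => x; rewrite inE; apply/idP/imsetP.
  case/andP=> x0 xl; have il : ((res x).-1 < l)%N by rewrite prednK.
  by exists (Ordinal il) => //=; rewrite prednK // resK.
by case=> -[i il] _ ->; rewrite res_nat modn_small /=; lia.
Qed.

Lemma segment_inj l : (l < p)%N -> injective (fun i : 'I_l => (i.+1)%:R : F).
Proof.
move=> lp i j /natF_inj eq; apply/val_inj/succn_inj/eq.
  by have := ltn_ord i; lia.
by have := ltn_ord j; lia.
Qed.

Lemma card_segment l : (l < p)%N -> #|segment l| = l.
Proof. by move=> lp; rewrite segment_image // card_imset ?card_ord //; apply: segment_inj. Qed.

Lemma prod_segment l : (l < p)%N -> \prod_(x in segment l) x = l`!%:R.
Proof.
move=> lp; rewrite segment_image // big_imset /=; last by move=> ? ? _ _; apply: segment_inj.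
by rewrite fact_prod big_add1 /= big_mkord natr_prod; apply: eq_bigl => i; rewrite inE.
Qed.

Lemma nonzero_segment : [set~ 0] = segment p.-1.
Proof.
apply/setP => x; rewrite !inE lt0n res_eq0 -ltnS prednK ?prime_gt0 //.
by rewrite res_lt andbT.
Qed.

Lemma prod_nonzero : \prod_(x in [set~ 0]) x = -1 :> F.
Proof.
rewrite nonzero_segment prod_segment ?prednK ?prime_gt0 //.
have : ((p.-1)`!.+1%:R : F) == 0.
  by rewrite -(dvdn_pcharf (pchar_Fp p_pr)) -(Wilson (prime_gt1 p_pr)).
by rewrite -natr1 addr_eq0 => /eqP.
Qed.

Lemma card_nonzero : #|[set~ (0 : F)]| = p.-1.
Proof. by rewrite cardsC1 card_Fp. Qed.

Hypothesis p_odd : odd p.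
Local Notation n := (p.-1)./2.

Lemma double_half_pred : n.*2 = p.-1.
Proof. by have := prime_gt0 p_pr; lia. Qed.

Lemma two_neq0 : (2%:R : F) != 0.
Proof. by rewrite natF_eq0; have := prime_gt1 p_pr; lia. Qed.

Lemma m1_neq1 : (-1 : F) != 1.
Proof. by rewrite eq_sym -subr_eq0 opprK -[1 + 1]/(2%:R : F) two_neq0. Qed.

Definition asc (h : F) := [set x | (x != 0) && (res x < res (x * h)%R)%N].
Definition desc (h : F) := [set x | (x != 0) && (res (x * h)%R < res x)%N].
Definition asc_prod (h : F) := \prod_(x in asc h) (x * (h - 1)).

Lemma res_opp_lt x y : x != 0 -> y != 0 -> (res (- x) < res (- y))%N = (res y < res x)%N.
Proof. by move=> x0 y0; rewrite !resN // ltn_sub2lE // ltnW ?res_lt. Qed.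

Lemma desc_opp h : h != 0 -> desc h = [set - x | x in asc h].
Proof.
move=> h0; apply/setP => y; rewrite inE; apply/idP/imsetP => [/andP [y0 lt] | [x]].
  exists (- y); last by rewrite opprK.
  by rewrite inE oppr_eq0 y0 mulNr res_opp_lt ?mulf_neq0.
by rewrite inE => /andP [x0 lt] ->; rewrite oppr_eq0 x0 mulNr res_opp_lt ?mulf_neq0.
Qed.

Lemma asc_desc_cover h : h != 1 -> asc h :|: desc h = [set~ 0].
Proof.
move=> h1; apply/setP => x; rewrite !inE -andb_orr; case: eqP => //= /eqP x0.
rewrite -neq_ltn; apply: contra_neq h1 => e.
by apply: (mulfI x0); rewrite mulr1; apply: val_inj; exact: esym e.
Qed.

Lemma asc_desc_disjoint h : [disjoint asc h & desc h].
Proof. by rewrite -setI_eq0; apply/eqP/setP => x; rewrite !inE; lia. Qed.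

Lemma card_desc h : h != 0 -> #|desc h| = #|asc h|.
Proof. by move=> h0; rewrite desc_opp // card_imset //; apply: oppr_inj. Qed.

Lemma card_asc h : h != 0 -> h != 1 -> #|asc h| = n.
Proof.
move=> h0 h1; have := cardsU (asc h) (desc h).
rewrite asc_desc_cover // card_nonzero (disjoint_setI0 (asc_desc_disjoint h)) cards0.
by rewrite card_desc //; lia.
Qed.

Lemma asc_inv h : h != 0 -> asc h^-1 = [set x * h | x in desc h].
Proof.
move=> h0; apply/setP => y; rewrite inE; apply/idP/imsetP => [/andP [y0 lt] | [x]].
  exists (y * h^-1); last by rewrite divfK.
  by rewrite inE mulf_neq0 ?invr_eq0 // divfK.
by rewrite inE => /andP [x0 lt] ->; rewrite mulf_neq0 // mulfK.
Qed.

Lemma asc_prod_inv h : h != 0 -> h != 1 -> asc_prod h * asc_prod h^-1 = (-1) ^+ n.+1.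
Proof.
move=> h0 h1.
have prod_asc_desc : \prod_(x in asc h) x * \prod_(x in desc h) x = -1.
  rewrite -bigU ?asc_desc_disjoint //= -prod_nonzero -(asc_desc_cover h1).
  by apply: eq_bigl => x; rewrite !inE.
have fermat_h1 : (h - 1) ^+ n.*2 = 1 by rewrite double_half_pred fermat // subr_eq0.
rewrite /asc_prod asc_inv // big_imset /=; last by move=> x y _ _; apply: mulIf.
rewrite !prodrMr card_desc // card_asc //.
have factor : (h - 1) * h * (h^-1 - 1) = - (h - 1) ^+ 2 by field.
transitivity ((\prod_(x in asc h) x * \prod_(x in desc h) x) * ((h - 1) * h * (h^-1 - 1)) ^+ n).
  by rewrite !exprMn; ring.
rewrite prod_asc_desc factor -[- _ ^+ 2]mulN1r exprMn -exprM mul2n fermat_h1.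
by rewrite mulr1 exprS.
Qed.

Lemma asc_m1 : asc (-1) = segment n.
Proof.
apply/setP => x; rewrite !inE mulrN1; have [->|x0] := eqVneq x 0; first by rewrite res0.
rewrite resN // lt0n res_eq0 x0 /=; have := res_lt x; have := double_half_pred.
by move=> *; apply/idP/idP; lia.
Qed.

Lemma opp_segment z : z != 0 -> (- z \in segment n) = (z \notin segment n).
Proof.
move=> z0; have z_gt0 : (0 < res z)%N by rewrite lt0n res_eq0.
rewrite !inE resN //; have := res_lt z; have := double_half_pred.
by move=> *; apply/idP/idP; lia.
Qed.

Lemma double_segment x : x \in segment n -> (2%:R * x \in segment n) = (res x <= n./2)%N.
Proof.
rewrite !inE => /andP [x_gt0 xn]; have := double_half_pred; have := prime_gt0 p_pr => *.
have -> : 2%:R * x = (2 * res x)%:R by rewrite natrM resK.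
rewrite res_nat modn_small; last by lia.
by apply/idP/idP; lia.
Qed.

Lemma asc_prod_m1 : asc_prod (-1) = (-1) ^+ n./2 * n`!%:R.
Proof.
have n_lt_p : (n < p)%N by have := prime_gt0 p_pr; lia.
have -> : asc_prod (-1) = \prod_(x in segment n) (- 2%:R * x).
  by rewrite /asc_prod asc_m1; apply: eq_bigr => x _; ring.
rewrite prod_scale_half_system ?oppr_eq0 ?two_neq0 ?inE ?res0 //; last exact: opp_segment.
rewrite prod_segment //; congr (_ ^+ _ * _).
have -> : [set x in segment n | - 2%:R * x \notin segment n] = segment n./2.
  apply/setP => x; rewrite inE; have [xn | nxn] /= := boolP (x \in segment n).
    have x0 : x != 0 by apply: contraTneq xn => ->; rewrite inE res0.
    rewrite mulNr opp_segment ?mulf_neq0 ?two_neq0 // negbK double_segment //.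
    by move: xn; rewrite !inE => /andP [-> _].
  by apply/esym/negbTE; apply: contraNN nxn; rewrite !inE; lia.
by rewrite card_segment //; lia.
Qed.

Lemma asc_prod_inv_closed (A : {set F}) :
  0 \notin A -> 1 \notin A -> -1 \notin A -> {in A, forall h, h^-1 \in A} ->
  ~~ odd #|A| /\ \prod_(h in A) asc_prod h = ((-1) ^+ n.+1) ^+ (#|A| %/ 2).
Proof.
move=> A0 A1 Am1 Ainv; apply: prod_fixpointfree_involution => h hA.
have h0 : h != 0 by apply: contraNneq A0 => <-.
have h1 : h != 1 by apply: contraNneq A1 => <-.
split; [exact: Ainv hA | | exact: invrK | exact: asc_prod_inv h0 h1].
apply: contraNneq Am1 => hV.
have : h ^+ 2 == 1 by rewrite expr2 -{1}hV mulVf.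
by rewrite sqrf_eq1 (negbTE h1) => /eqP <-.
Qed.

Lemma asc_prod1 : asc_prod 1 = 1.
Proof.
rewrite /asc_prod (_ : asc 1 = set0) ?big_set0 //.
by apply/setP => x; rewrite !inE mulr1 ltnn andbF.
Qed.

Section Powers.
Variable m : nat.

Definition powers : {set F} := [set w ^+ m | w in [set~ 0]].

Lemma powers_neq0 z : z \in powers -> z != 0.
Proof. by case/imsetP => w; rewrite !inE => w0 ->; rewrite expf_neq0. Qed.

Lemma powers1 : 1 \in powers.
Proof. by apply/imsetP; exists 1; rewrite ?inE ?oner_neq0 ?expr1n. Qed.

Lemma powersM z1 z2 : z1 \in powers -> z2 \in powers -> z1 * z2 \in powers.
Proof.
case/imsetP => w1; rewrite !inE => w10 ->; case/imsetP => w2; rewrite !inE => w20 ->.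
by apply/imsetP; exists (w1 * w2); rewrite ?inE ?mulf_neq0 ?exprMn.
Qed.

Lemma powersV z : z \in powers -> z^-1 \in powers.
Proof.
case/imsetP => w; rewrite !inE => w0 ->.
by apply/imsetP; exists w^-1; rewrite ?inE ?invr_eq0 ?exprVn.
Qed.

Lemma eq_modF r l : (r < p)%N -> (r == l %% p)%N = ((r%:R : F) == l%:R).
Proof.
move=> rp; apply/eqP/eqP => [->|e]; first by rewrite Fp_nat_mod.
by rewrite -(modn_small rp) -!res_nat e.
Qed.

Lemma inH_powers r : (r < p)%N -> inH p m r = ((r%:R : F) \in powers).
Proof.
move=> rp; apply/existsP/imsetP => [[x /andP [x_gt0]] | [w]].
  rewrite eq_modF // natrX => /eqP ->; exists x%:R => //.
  by rewrite !inE natF_eq0 ?ltn_ord // -lt0n.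
rewrite !inE => w0 e; exists (Ordinal (res_lt w)).
by rewrite /= lt0n res_eq0 w0 eq_modF // natrX resK e eqxx.
Qed.

Lemma in_coset_powers g r : (0 < g < p)%N ->
  in_coset p m g r = (0 < r < p)%N && ((r%:R / g%:R : F) \in powers).
Proof.
case/andP => g_gt0 gp; rewrite /in_coset.
case: (boolP (0 < r < p)%N) => //= /andP [r_gt0 rp].
have gF0 : (g%:R : F) != 0 by rewrite natF_eq0 // -lt0n.
apply/existsP/idP => [[h /andP [hH]] | rH].
  rewrite inH_powers // in hH; rewrite eq_modF // natrM => /eqP ->.
  by rewrite mulrC mulKf.
pose z : F := r%:R / g%:R; exists (Ordinal (res_lt z)).
rewrite (_ : nat_of_ord _ = res z) // inH_powers ?res_lt // resK rH.
by rewrite eq_modF // natrM resK /z mulrC divfK ?eqxx.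
Qed.

Section Cosets.
Variables (k : nat) (a : 'I_m -> 'I_k -> nat).
Hypotheses (hk : (0 < k)%N) (hm : (0 < m)%N) (hkm : (k * m = p - 1)%N)
  (ha_range : forall i j, (1 <= a i j <= p - 1)%N)
  (ha_incr : forall i (s t : 'I_k), (s < t)%N -> (a i s < a i t)%N)
  (ha_coset : forall i, is_coset_of_H p m (fun r => exists j, a i j = r))
  (ha_distinct : forall i1 i2 : 'I_m,
      (forall r, (exists j, a i1 j = r) <-> (exists j, a i2 j = r)) -> i1 = i2).

Local Notation aF i j := ((a i j)%:R : F).

Lemma a_lt_p i j : (a i j < p)%N.
Proof. by have := ha_range i j; have := prime_gt0 p_pr; lia. Qed.

Lemma aF_neq0 i j : aF i j != 0.
Proof. by rewrite natF_eq0 ?a_lt_p // -lt0n; case/andP: (ha_range i j). Qed.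

Lemma res_aF i j : res (aF i j) = a i j.
Proof. by rewrite res_nat modn_small ?a_lt_p. Qed.

Lemma a_ltE i (s t : 'I_k) : (a i s < a i t)%N = (s < t)%N.
Proof.
case: (ltngtP s t) => [/ha_incr -> // | /ha_incr lt | /val_inj ->]; last by rewrite ltnn.
by rewrite ltnNge ltnW.
Qed.

Lemma a_inj i : injective (a i).
Proof.
move=> s t e; case: (ltngtP s t) => [| | /val_inj //]; by rewrite -(a_ltE i) e ltnn.
Qed.

Lemma aF_inj i : injective (fun t => aF i t).
Proof. by move=> t t' /natF_inj e; apply: (@a_inj i); apply: e; apply: a_lt_p. Qed.

Lemma mem_coset i s r :
  (exists j, a i j = r) <-> (0 < r < p)%N /\ (r%:R / aF i s \in powers).
Proof.
have [g [g_range coset_g]] := ha_coset i.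
have gF0 : (g%:R : F) != 0.
  by case/andP: g_range => g_gt0 gp; rewrite natF_eq0 // -lt0n.
have sH : aF i s / g%:R \in powers.
  have := (coset_g (a i s)).1 (ex_intro _ s erefl).
  by rewrite in_coset_powers // => /andP [].
rewrite coset_g in_coset_powers //; split => [/andP [-> rH] | [-> rH]].
  split => //; have -> : r%:R / aF i s = (r%:R / g%:R) / (aF i s / g%:R).
    by field; rewrite aF_neq0 gF0.
  exact: powersM rH (powersV sH).
have -> : r%:R / g%:R = (r%:R / aF i s) * (aF i s / g%:R).
  by field; rewrite aF_neq0 gF0.
exact: powersM rH sH.
Qed.

Lemma coset_quot i s t : aF i t / aF i s \in powers.
Proof. by have [] := (mem_coset i s (a i t)).1 (ex_intro _ t erefl). Qed.

Lemma coset_mul i s h : h \in powers -> exists t, aF i t = aF i s * h.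
Proof.
move=> hH; have x0 : aF i s * h != 0 by rewrite mulf_neq0 ?aF_neq0 ?powers_neq0.
have [t e] : exists t, a i t = res (aF i s * h).
  apply/(mem_coset i s); split; first by rewrite res_lt andbT lt0n res_eq0.
  by rewrite resK mulrC mulKf ?aF_neq0.
by exists t; rewrite e resK.
Qed.

Lemma coset_image i s : [set aF i t | t : 'I_k] = [set aF i s * h | h in powers].
Proof.
apply/setP => x; apply/imsetP/imsetP => [[t _ ->] | [h hH ->]].
  by exists (aF i t / aF i s); rewrite ?coset_quot // mulrC divfK ?aF_neq0.
by have [t e] := coset_mul i s hH; exists t; rewrite ?e.
Qed.

Lemma card_powers : #|powers| = k.
Proof.
rewrite -(card_imset _ (mulfI (aF_neq0 (Ordinal hm) (Ordinal hk)))) -coset_image.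
by rewrite card_imset ?card_ord //; apply: aF_inj.
Qed.

Lemma aF_pair_inj : injective (fun u : 'I_m * 'I_k => aF u.1 u.2).
Proof.
move=> [i s] [i' s'] /= /natF_inj e; have {}e : a i s = a i' s' by apply: e; apply: a_lt_p.
have ii' : i = i'.
  apply: ha_distinct => r; rewrite (mem_coset i s) (mem_coset i' s').
  by rewrite e.
by move: e; rewrite ii' => /a_inj ->.
Qed.

Lemma aF_pair_onto : [set aF u.1 u.2 | u in [set: 'I_m * 'I_k]] = [set~ 0].
Proof.
apply/eqP; rewrite eqEcard card_imset; last exact: aF_pair_inj.
rewrite cardsT card_prod !card_ord card_nonzero mulnC hkm subn1 leqnn andbT.
by apply/subsetP => _ /imsetP [u _ ->]; rewrite !inE aF_neq0.
Qed.

Lemma prod_coset_gt i (s : 'I_k) :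
  \prod_(t < k | (s < t)%N) (aF i t - aF i s) =
  \prod_(h in powers | aF i s \in asc h) (aF i s * (h - 1)).
Proof.
set x := aF i s; have x0 : x != 0 := aF_neq0 i s.
have quotI : {in [set t : 'I_k | (s < t)%N] &, injective (fun t => aF i t / x)}.
  by move=> t t' _ _ /(mulIf (invr_neq0 x0)) /aF_inj.
have quot_onto : [set aF i t / x | t in [set t : 'I_k | (s < t)%N]] =
                 [set h in powers | x \in asc h].
  apply/setP => h; rewrite inE; apply/imsetP/idP => [[t] | /andP [hH]].
    rewrite inE => st ->; rewrite coset_quot inE x0 [x * _]mulrC divfK //.
    by rewrite !res_aF a_ltE.
  rewrite inE x0 /= => lt; have [t e] := coset_mul i s hH.
  exists t; last by rewrite e mulrC mulKf.
  by rewrite inE -(a_ltE i) -(res_aF i s) -(res_aF i t) e.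
have -> : \prod_(h in powers | x \in asc h) (x * (h - 1)) =
          \prod_(h in [set h in powers | x \in asc h]) (x * (h - 1)).
  by apply: eq_bigl => h; rewrite inE.
rewrite -quot_onto big_imset //=; apply: eq_big => [t | t _]; first by rewrite inE.
by rewrite mulrBr mulr1 mulrC divfK.
Qed.

Lemma prod_cosets :
  \prod_(i < m) \prod_(s < k) \prod_(t < k | (s < t)%N) (aF i t - aF i s) =
  \prod_(h in powers) asc_prod h.
Proof.
pose G x := \prod_(h in powers | x \in asc h) (x * (h - 1)).
transitivity (\prod_(x in [set~ 0]) G x).
  rewrite -aF_pair_onto big_imset /=; last by move=> u w _ _; apply: aF_pair_inj.
  rewrite pair_big /=; apply: eq_big => [u | [i s] _]; first by rewrite inE.
  exact: prod_coset_gt.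
rewrite /G (exchange_big_dep (fun h => h \in powers)) /=; last by move=> x h _ /andP [].
apply: eq_bigr => h hH; apply: eq_bigl => x.
by rewrite hH !inE /= andbA andbb.
Qed.


Lemma prod_cosets_F :
  \prod_(i < m) \prod_(s < k) \prod_(t < k | (s < t)%N) (aF i t - aF i s) =
  if odd k then (-1) ^+ (n.+1 * k./2)
  else (-1) ^+ (n./2 + n.+1 * k./2.-1) * n`!%:R.
Proof.
set A := powers :\ 1 :\ -1.
have [evenA prodA] :
    ~~ odd #|A| /\ \prod_(h in A) asc_prod h = ((-1) ^+ n.+1) ^+ (#|A| %/ 2).
  apply: asc_prod_inv_closed.
  - by apply/negP; rewrite !inE => /and3P [_ _ /powers_neq0]; rewrite eqxx.
  - by rewrite !inE eqxx andbF.
  - by rewrite !inE eqxx.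
  - move=> h; rewrite !inE => /and3P [hm1 h1 hH].
    by rewrite powersV // invr_eq1 h1 -[-1]invrN1 (inj_eq invr_inj) hm1.
have cardA : k = (1 + ((-1)%R \in powers) + #|A|)%N.
  rewrite -card_powers (cardsD1 1) powers1 (cardsD1 (-1) (powers :\ 1)).
  by rewrite in_setD1 m1_neq1 addnA.
rewrite prod_cosets (big_setD1 1) ?powers1 //= asc_prod1 mul1r.
move: cardA; case: (boolP (-1 \in powers)) => m1H /= ->; rewrite !oddD /= (negbTE evenA).
  rewrite (big_setD1 (-1)) ?in_setD1 ?m1_neq1 //= prodA -exprM asc_prod_m1 exprD mulrAC.
  by congr (_ * _ ^+ (_ * _) * _); lia.
have -> : powers :\ 1 = A.
  apply/setP => h; rewrite !inE; case: (eqVneq h (-1)) => [->|//].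
  by rewrite (negbTE m1H) !andbF.
by rewrite prodA -exprM /=; congr (_ ^+ (_ * _)); lia.
Qed.

End Cosets.
End Powers.
End PrimeField.

Lemma modz_Fp p (x y : int) : prime p -> (x%:~R : 'F_p) = y%:~R -> (x = y %[mod p])%Z.
Proof.
move=> p_pr e; apply/eqP; rewrite eqz_mod_dvd (dvdz_pcharf (pchar_Fp p_pr)).
by rewrite rmorphB /= e subrr.
Qed.

Lemma mod_double_mul k m : (0 < m)%N -> ((k * m).+1 %% (2 * m) == 1)%N = ~~ odd k.
Proof.
move=> m_gt0; case: (odd k) (odd_double_half k) => /= kE.
  have -> : (k * m).+1 = (k./2 * (2 * m) + m.+1)%N by rewrite -kE; nia.
  by rewrite modnMDl; case: m m_gt0 => [|[|m]] // _; rewrite modn_small //; lia.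
have -> : (k * m).+1 = (k./2 * (2 * m) + 1)%N by rewrite -kE; nia.
by rewrite modnMDl modn_small //; lia.
Qed.

Lemma div_double_mul k m : (0 < m)%N -> ((k * m - odd k * m) %/ (2 * m))%N = k./2.
Proof.
move=> m_gt0; rewrite -mulnBl -{1}(odd_double_half k) addKn -muln2 -mulnA.
by rewrite mulnK // muln_gt0.
Qed.

Lemma odd_sign_exponent n j : (0 < n)%N -> (0 < j)%N ->
  odd (n./2 + n.+1 * j.-1) = odd (n.+1 * j + n.-1./2).
Proof.
move=> n_gt0 j_gt0; rewrite -subn1 mulnBr muln1.
have : (n.+1 <= n.+1 * j)%N by rewrite leq_pmulr.
by move: (n.+1 * j)%N => X; lia.
Qed.

Theorem theorem3p1 (p k m : nat) (a : 'I_m -> 'I_k -> nat)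
  (hp : prime p) (hodd : odd p) (hk : (0 < k)%N) (hm : (0 < m)%N)
  (hkm : (k * m = p - 1)%N)
  (ha_range : forall i j, (1 <= a i j <= p - 1)%N)
  (ha_incr : forall i (s t : 'I_k), (s < t)%N -> (a i s < a i t)%N)
  (ha_coset : forall i, is_coset_of_H p m (fun r => exists j, a i j = r))
  (ha_distinct : forall i1 i2 : 'I_m,
      (forall r, (exists j, a i1 j = r) <-> (exists j, a i2 j = r)) -> i1 = i2) :
  let P : int := \prod_(i < m) \prod_(s < k) \prod_(t < k | (s < t)%N)
                   ((a i t)%:Z - (a i s)%:Z) in
  ((p %% (2 * m))%N = 1%N ->
     (P = (-1) ^+ ((p + 1) %/ 2 * ((p - 1) %/ (2 * m)) + (p - 3) %/ 4)%N
            * ((p - 1) %/ 2)`!%:Z %[mod p%:Z])%Z) /\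
  ((p %% (2 * m))%N = ((1 + m) %% (2 * m))%N ->
     (P = (-1) ^+ ((p + 1) %/ 2 * ((p - 1 - m) %/ (2 * m)))%N %[mod p%:Z])%Z).
Proof.
move=> P; have p_gt2 : (2 < p)%N by have := prime_gt1 hp; lia.
have PF : P%:~R = \prod_(i < m) \prod_(s < k) \prod_(t < k | (s < t)%N)
                    ((a i t)%:R - (a i s)%:R : 'F_p).
  rewrite rmorph_prod; apply: eq_bigr => i _; rewrite rmorph_prod; apply: eq_bigr => s _.
  by rewrite rmorph_prod; apply: eq_bigr => t _; rewrite rmorphB /= -!pmulrn.
have := prod_cosets_F hp hodd hk hm hkm ha_range ha_incr ha_coset ha_distinct.
rewrite -PF => prodF; have p_km : p = (k * m).+1 by lia.
have half_k : ((p - 1 - odd k * m) %/ (2 * m))%N = k./2 by rewrite -hkm div_double_mul.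
have half_p : ((p + 1) %/ 2)%N = ((p.-1)./2).+1 by lia.
have odd_kE : ((p %% (2 * m))%N == 1%N) = ~~ odd k by rewrite p_km mod_double_mul.
split => p_mod; apply: (modz_Fp hp).
  have k_even : ~~ odd k by rewrite -odd_kE p_mod.
  rewrite (negbTE k_even) mul0n subn0 in half_k; rewrite (negbTE k_even) in prodF.
  rewrite prodF rmorphM rmorphXn rmorphN1 /= -pmulrn half_k half_p.
  have -> : ((p - 1) %/ 2)%N = (p.-1)./2 by lia.
  have -> : ((p - 3) %/ 4)%N = (p.-1)./2.-1./2 by lia.
  by rewrite -signr_odd -[in RHS]signr_odd odd_sign_exponent //; lia.
have k_odd : odd k.
  by apply: negbNE; rewrite -odd_kE p_mod add1n -{1}(mul1n m) mod_double_mul.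
rewrite k_odd mul1n in half_k; rewrite k_odd in prodF.
by rewrite prodF rmorphXn rmorphN1 half_p half_k.
Qed.
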